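(* Let $G$ be a connected bipartite graph with color classes $E$ and $V$, let $\mathbf f$ be a hypertree of $(V,E)$ and $\Gamma$ a spanning tree of $G$ realizing $\mathbf f$. Let $E'\subset E$ be tight at $\mathbf f$. Then each part of the partition of $E'$ induced by the connected components of $\Gamma|_{E'}$ is itself tight at $\mathbf f$.
   Context: A hypertree of $(V,E)$ is a function $\mathbf f\colon E\to\mathbf N$ such that some spanning tree $\Gamma$ of $G$ has degree $\mathbf f(e)+1$ at every $e\in E$; such $\Gamma$ realizes $\mathbf f$. For a subgraph $H$ of $G$ and $E'\subset E$, $H|_{E'}$ is the graph formed by $E'$, all edges of $H$ adjacent to elements of $E'$, and their endpoints in $V$. Let $c(E')$ be the number of connected components of $G|_{E'}$ and $\bigcup E'$ the set of vertices of $V$ in $G|_{E'}$; set $\mu(\varnothing)=0$ and $\mu(E')=|\bigcup E'|-c(E')$ otherwise. A set $E'\subset E$ is tight at $\mathbf f$ if $\sum_{e\in E'}\mathbf f(e)=\mu(E')$. The components of $\Gamma|_{E'}$ partition $E'$. *)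

From mathcomp Require Import all_boot all_order all_algebra.
Set Implicit Arguments. Unset Strict Implicit. Unset Printing Implicit Defensive.

(* A bipartite graph G with colour classes E and V is given by its incidence
   relation  h : E -> V -> bool  (h e v = "e and v are adjacent").
   Subgraphs H of G (e.g. spanning trees) are given by relations
   h' with h' e v -> h e v. *)

Definition bgrel (E V : finType) (h : E -> V -> bool) : rel (E + V) :=
  fun x y => match x, y with
             | inl e, inr v => h e v
             | inr v, inl e => h e v
             | _, _ => false
             end.

Definition connected (E V : finType) (h : E -> V -> bool) : Prop :=
  forall x y : E + V, connect (bgrel h) x y.

Definition acyclic (E V : finType) (h : E -> V -> bool) : Prop :=
  forall c : seq (E + V), uniq c -> 2 < size c -> ~~ cycle (bgrel h) c.

Definition spanning_tree (E V : finType) (g gam : E -> V -> bool) : Prop :=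
  [/\ forall e v, gam e v -> g e v, connected gam & acyclic gam].

Definition deg (E V : finType) (gam : E -> V -> bool) (e : E) : nat :=
  #|[set v | gam e v]|.

Definition realizes (E V : finType) (gam : E -> V -> bool) (f : E -> nat) : Prop :=
  forall e, deg gam e = (f e).+1.

Definition hypertree (E V : finType) (g : E -> V -> bool) (f : E -> nat) : Prop :=
  exists gam, spanning_tree g gam /\ realizes gam f.

(* H|_{E'} : edges of H adjacent to E', vertices E' and their H-neighbours *)
Definition restr (E V : finType) (h : E -> V -> bool) (E' : {set E}) : E -> V -> bool :=
  fun e v => (e \in E') && h e v.

Definition bigU (E V : finType) (h : E -> V -> bool) (E' : {set E}) : {set V} :=
  [set v | [exists e in E', h e v]].

Definition rverts (E V : finType) (h : E -> V -> bool) (E' : {set E}) : {set E + V} :=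
  [set x | match x with inl e => e \in E' | inr v => v \in bigU h E' end].

Definition ncomp (E V : finType) (h : E -> V -> bool) (E' : {set E}) : nat :=
  n_comp (bgrel (restr h E')) (mem (rverts h E')).

Definition mu (E V : finType) (g : E -> V -> bool) (E' : {set E}) : int :=
  if E' == set0 then 0%R else (Posz #|bigU g E'| - Posz (ncomp g E'))%R.

Definition tight (E V : finType) (g : E -> V -> bool) (f : E -> nat) (E' : {set E}) : Prop :=
  Posz (\sum_(e in E') f e) = mu g E'.

From Pilot Require Import Defs.
From mathcomp Require Import all_boot all_order all_algebra zify.
Set Implicit Arguments. Unset Strict Implicit. Unset Printing Implicit Defensive.

(* Gamma|E' is a forest on the vertices of G|E', so it has #vertices - #edges components;
   since Gamma realizes f this is |\bigcup E'| - sum_{E'} f, which tightness says is c(E').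
   A subgraph with as many components as the graph on the same vertex set has the same
   components, so every edge of G at E' joins two vertices of one component of Gamma|E'.
   Hence on a part P both G|P and Gamma|P are connected with the same vertices, and the
   forest count for Gamma|P gives sum_P f = |\bigcup P| - 1 = mu(P). *)

Local Notation root := fingraph.root.
Local Notation rootP := fingraph.rootP.

Section Components.
Variable T : finType.
Implicit Types (r : rel T) (a : {set T}).

Lemma connect_ind r x (P : T -> Prop) :
  P x -> (forall u w, connect r x u -> P u -> r u w -> P w) ->
  forall y, connect r x y -> P y.
Proof.
move=> Px IH y /connectP[s rs ->]; elim/last_ind: s rs => //= s z IHs.
rewrite rcons_path last_rcons => /andP[rs rz].
by apply: IH rz; [apply/connectP; exists s | apply: IHs].
Qed.

Lemma connect_sub_reach r r' x y :
  (forall u w, connect r x u -> r u w -> r' u w) -> connect r x y -> connect r' x y.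
Proof.
move=> rr'; elim/connect_ind => // u w xu xu' ruw.
exact: connect_trans xu' (connect1 (rr' _ _ xu ruw)).
Qed.

Lemma connect_last r x y : connect r x y -> x != y -> exists2 z, connect r x z & r z y.
Proof.
move=> /connectP[s rs ->]; elim/last_ind: s rs => [|s z _] /=; first by rewrite eqxx.
rewrite rcons_path last_rcons => /andP[rs rz] _.
by exists (last x s) => //; apply/connectP; exists s.
Qed.

Lemma n_compE r a : symmetric r -> closed r a ->
  n_comp r a = #|[set root r x | x in a]|.
Proof.
move=> /sym_connect_sym r_sym a_cl; apply: eq_card => x; rewrite !inE.
apply/andP/imsetP => [[/eqP rx xa] | [y ya ->]]; first by exists x.
by split; rewrite ?roots_root // -(closed_connect a_cl (connect_root r y)).
Qed.

Lemma n_comp_coarsen r r' a :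
  symmetric r -> symmetric r' -> closed r a -> closed r' a -> subrel r (connect r') ->
  n_comp r' a = #|root r' @: [set root r x | x in a]|.
Proof.
move=> r_sym r'_sym a_cl a_cl' rr'; rewrite n_compE // -imset_comp.
rewrite (@eq_in_imset _ _ (root r') (root r' \o root r)) // => x _ /=.
by apply/(rootP (sym_connect_sym r'_sym))/(connect_sub rr')/connect_root.
Qed.

Lemma n_comp_subrel_lt r r' a x y :
  symmetric r -> symmetric r' -> closed r a -> closed r' a -> subrel r r' ->
  x \in a -> r' x y -> ~~ connect r x y -> n_comp r' a < n_comp r a.
Proof.
move=> r_sym r'_sym a_cl a_cl' rr' xa r'xy; apply: contraR.
have r'_csym := sym_connect_sym r'_sym.
have rr'_conn : subrel r (connect r') by move=> u w /rr' /connect1.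
have ya : y \in a by rewrite -(a_cl' _ _ r'xy).
have root_root_r z : root r' (root r z) = root r' z.
  by apply/esym/(rootP r'_csym)/(connect_sub rr'_conn)/connect_root.
rewrite (n_comp_coarsen r_sym r'_sym) // n_compE // -leqNgt => le_card.
have /imset_injP inj : #|root r' @: [set root r z | z in a]| ==
    #|[set root r z | z in a]| by rewrite eqn_leq le_card leq_imset_card.
rewrite -(root_connect (sym_connect_sym r_sym)); apply/eqP/inj; rewrite ?imset_f //.
by rewrite !root_root_r; apply/(rootP r'_csym)/connect1.
Qed.

Definition add_edge r x y : rel T :=
  [rel u w | [|| r u w, (u == x) && (w == y) | (u == y) && (w == x)]].

Lemma connect_add_edge r x y u w : connect (add_edge r x y) u w ->
  [|| connect r u w, connect r u x && connect r y w | connect r u y && connect r x w].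
Proof.
elim/connect_ind => [|v z _ IH]; first by rewrite connect0.
move=> /or3P[rvz | /andP[/eqP E /eqP->] | /andP[/eqP E /eqP->]]; rewrite ?E in IH;
  case/or3P: IH => [uv | /andP[ux yv] | /andP[uy xv]];
  by rewrite ?(connect_trans uv (connect1 rvz)) ?(connect_trans yv (connect1 rvz))
             ?(connect_trans xv (connect1 rvz)) ?uv ?ux ?uy ?connect0 ?orbT.
Qed.

Lemma add_edge_sym r x y : symmetric r -> symmetric (add_edge r x y).
Proof.
move=> r_sym u w; rewrite /add_edge /= r_sym; congr (_ || _).
by rewrite orbC; congr (_ || _); apply: andbC.
Qed.

Lemma n_comp_add_edge r a x y :
  symmetric r -> closed r a -> x \in a -> y \in a -> ~~ connect r x y ->
  n_comp r a = (n_comp (add_edge r x y) a).+1.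
Proof.
move=> r_sym a_cl xa ya rxy.
have r_csym := sym_connect_sym r_sym; have r'_sym := add_edge_sym x y r_sym.
have a_cl' : closed (add_edge r x y) a.
  by move=> u w /or3P[/a_cl // | /andP[/eqP-> /eqP->] | /andP[/eqP-> /eqP->]];
    rewrite xa ya.
have rr' : subrel r (connect (add_edge r x y)).
  by move=> u w ruw; apply/connect1/or3P; apply: Or31.
rewrite n_compE // (n_comp_coarsen r_sym r'_sym) //.
set root' := root (add_edge r x y); set S := [set root r z | z in a].
have root'_root z : root' (root r z) = root' z.
  by apply/esym/(rootP (sym_connect_sym r'_sym))/(connect_sub rr')/connect_root.
have ryS : root r y \in S by rewrite imset_f.
have rxS : root r x \in S :\ root r y.
  by rewrite !inE imset_f // andbT root_connect.
have root'_S : root' @: (S :\ root r y) = root' @: S.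
  apply/eqP; rewrite eqEsubset imsetS ?subsetDl //=; apply/subsetP => _ /imsetP[z zS ->].
  have [-> | ne] := eqVneq z (root r y); last by rewrite imset_f // !inE ne.
  apply/imsetP; exists (root r x) => //; rewrite !root'_root.
  by apply/(rootP (sym_connect_sym r'_sym))/connect1/or3P; rewrite !eqxx; apply: Or33.
rewrite -root'_S card_in_imset ?(cardsD1 (root r y) S) ?ryS //.
move=> u0 w0 /setD1P[uy /imsetP[u _ Eu]] /setD1P[wy /imsetP[w _ Ew]]; subst u0 w0.
move/(rootP (sym_connect_sym r'_sym))/connect_add_edge.
rewrite -!(root_connect r_csym) !(root_root r_csym).
by case/or3P=> [/eqP // | /andP[_ /eqP yw] | /andP[/eqP uy' _]];
  [rewrite yw eqxx in wy | rewrite uy' eqxx in uy].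
Qed.

Lemma n_comp_rel0 a : n_comp [rel _ _ : T | false] a = #|a|.
Proof.
have root0 x : root [rel _ _ : T | false] x = x.
  by have /connectP[[|z s] //= _ ->] := connect_root [rel _ _ : T | false] x.
by rewrite n_compE // (eq_imset _ root0) imset_id.
Qed.
End Components.

Section Bipartite.
Variables E V : finType.
Implicit Types (h : E -> V -> bool) (X : {set E}) (F : {set E * V}).

Lemma bgrel_sym h : symmetric (bgrel h).
Proof. by move=> [e|v] [e'|v']. Qed.

Definition edge_rel F : rel (E + V) := bgrel (fun e v => (e, v) \in F).

Lemma edge_rel_setU1 F e v : (e, v) \notin F ->
  edge_rel ((e, v) |: F) =2 add_edge (edge_rel F) (inl e) (inr v).
Proof.
move=> evF [e1|v1] [e2|v2]; rewrite /add_edge /edge_rel /= ?inE -!sum_eqE /= ?andbF ?orbF //.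
  by rewrite xpair_eqE orbC.
by rewrite xpair_eqE orbC andbC.
Qed.

Lemma acyclic_edge_disconnected gam F e v :
  acyclic gam -> (forall q, q \in F -> gam q.1 q.2) -> gam e v -> (e, v) \notin F ->
  ~~ connect (edge_rel F) (inl e) (inr v).
Proof.
move=> gam_acyc gamF gam_ev evF; apply/negP => /connectP[s Fs].
case: (shortenP Fs) => s' Fs' uniq_s' _ last_s' {s Fs}.
have Fgam : subrel (edge_rel F) (bgrel gam) by move=> [e1|v1] [e2|v2] //= /gamF.
have : cycle (bgrel gam) (inl e :: s') by rewrite /= rcons_path (sub_path Fgam Fs') -last_s'.
apply/negP/gam_acyc => //.
case: s' Fs' uniq_s' last_s' => [|x [|y s']] //= Fs' _ last_s'.
by move: Fs'; rewrite -last_s' /= andbT (negbTE evF).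
Qed.

Lemma n_comp_forest gam (a : {set E + V}) F : acyclic gam ->
  (forall q, q \in F -> gam q.1 q.2) ->
  (forall q, q \in F -> (inl q.1 \in a) && (inr q.2 \in a)) ->
  n_comp (edge_rel F) a + #|F| = #|a|.
Proof.
move=> gam_acyc; move: {2}#|F| (erefl #|F|) => n; elim: n F => [|n IHn] F.
  move/eqP; rewrite cards_eq0 => /eqP-> _ _; rewrite cards0 addn0 -n_comp_rel0.
  by apply/eq_n_comp/eq_connect => -[e|v] [e'|v'] /=; rewrite ?inE.
have [-> | [[e v] evF]] := set_0Vmem F; first by rewrite cards0.
move=> card_F gamF aF.
have evF' : (e, v) \notin F :\ (e, v) by rewrite !inE eqxx.
have subF q : q \in F :\ (e, v) -> q \in F by case/setD1P.
have /andP[ea va] := aF _ evF.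
rewrite -(setD1K evF) cardsU1 evF' add1n addnS.
rewrite (eq_n_comp (eq_connect (edge_rel_setU1 evF'))) -addSn -n_comp_add_edge ?IHn //.
- by move: card_F; rewrite (cardsD1 (e, v)) evF add1n => -[].
- by move=> q /subF /gamF.
- by move=> q /subF /aF.
- exact: bgrel_sym.
- by move=> [e1|v1] [e2|v2] //= /subF /aF /andP[-> ->].
- by apply: (acyclic_edge_disconnected gam_acyc) (gamF _ evF) evF' => q /subF /gamF.
Qed.

Lemma card_restr_edges h X :
  #|[set q : E * V | restr h X q.1 q.2]| = \sum_(e in X) deg h e.
Proof.
rewrite -sum1_card /deg (eq_bigr (fun e => \sum_(v | h e v) 1)); last first.
  by move=> e _; rewrite -sum1_card; apply: eq_bigl => v; rewrite inE.
by rewrite pair_big_dep /=; apply: eq_bigl => -[e v]; rewrite !inE.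
Qed.

Lemma card_rverts h X : #|rverts h X| = #|X| + #|Defs.bigU h X|.
Proof.
by rewrite -!sum1_card big_sumType /=; congr (_ + _); apply: eq_bigl => x; rewrite !inE.
Qed.

Lemma closed_rverts h h' X : (forall e v, h e v -> h' e v) ->
  closed (bgrel (restr h X)) (rverts h' X).
Proof.
move=> hh' [e|v] [e'|v'] //= /andP[eX hev]; rewrite !inE eX /=.
  by apply/esym/existsP; exists e; rewrite eX hh'.
by apply/existsP; exists e'; rewrite eX hh'.
Qed.

Lemma n_comp_restr_forest gam h X : acyclic gam -> (forall e v, gam e v -> h e v) ->
  n_comp (bgrel (restr gam X)) (rverts h X) + \sum_(e in X) deg gam e =
    #|X| + #|Defs.bigU h X|.
Proof.
move=> gam_acyc gam_h; set F := [set q : E * V | restr gam X q.1 q.2].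
have restr_F : bgrel (restr gam X) =2 edge_rel F by move=> [e|v] [e'|v']; rewrite /= ?inE.
rewrite (eq_n_comp (eq_connect restr_F)) -card_restr_edges -card_rverts.
apply: n_comp_forest gam_acyc _ _ => q.
  by rewrite inE => /andP[].
rewrite inE => /andP[qX gam_q]; rewrite !inE qX /=.
by apply/existsP; exists q.1; rewrite qX gam_h.
Qed.
End Bipartite.

Lemma tightE (E V : finType) (g : E -> V -> bool) (f : E -> nat) (X : {set E}) :
  X != set0 -> tight g f X <-> \sum_(e in X) f e + ncomp g X = #|Defs.bigU g X|.
Proof. by move=> /negbTE X_neq0; rewrite /tight /mu X_neq0; split; lia. Qed.

Definition restr_component (E V : finType) (h : E -> V -> bool) (X : {set E}) (e0 : E) :=
  [set e in X | connect (bgrel (restr h X)) (inl e0) (inl e)].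

Section TightComponent.
Variables (E V : finType) (g gam : E -> V -> bool) (f : E -> nat).
Hypotheses (gam_g : forall e v, gam e v -> g e v) (gam_acyclic : acyclic gam)
  (gam_f : realizes gam f).
Implicit Types (h : E -> V -> bool) (X : {set E}).

Lemma n_comp_restr_realizes h X : (forall e v, gam e v -> h e v) ->
  n_comp (bgrel (restr gam X)) (rverts h X) + \sum_(e in X) f e = #|Defs.bigU h X|.
Proof.
move=> gam_h; have := n_comp_restr_forest X gam_acyclic gam_h.
rewrite (eq_bigr (fun e => f e + 1)) => [|e _]; last by rewrite gam_f addn1.
by rewrite big_split /= sum1_card addnA [_ + #|X|]addnC => /addnI.
Qed.

Lemma tight_n_comp X : X != set0 -> tight g f X ->
  n_comp (bgrel (restr gam X)) (rverts g X) = ncomp g X.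
Proof.
move=> X_neq0 /(tightE g f X_neq0); rewrite -(n_comp_restr_realizes X gam_g) /ncomp; lia.
Qed.

Lemma tight_edge_connect X e v : tight g f X -> e \in X -> g e v ->
  connect (bgrel (restr gam X)) (inl e) (inr v).
Proof.
move=> X_tight eX gev; apply/negPn/negP => disconnected.
have X_neq0 : X != set0 by apply/set0Pn; exists e.
have : ncomp g X < n_comp (bgrel (restr gam X)) (rverts g X).
  apply: n_comp_subrel_lt (bgrel_sym _) (bgrel_sym _) _ _ _ _ _ disconnected.
  - exact: closed_rverts.
  - exact: closed_rverts.
  - by move=> [e1|v1] [e2|v2] //=; rewrite /restr => /andP[-> /gam_g].
  - by rewrite inE.
  - by rewrite /= /restr eX.
by rewrite tight_n_comp // ltnn.
Qed.

Variables (E' : {set E}) (e0 : E).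
Local Notation P := (restr_component gam E' e0).

Lemma connect_restr_component h y : (forall e v, gam e v -> h e v) ->
  connect (bgrel (restr gam E')) (inl e0) y -> connect (bgrel (restr h P)) (inl e0) y.
Proof.
move=> gam_h; apply: connect_sub_reach => -[e|v] [e'|v'] //= reach /andP[e'E' gam_e].
  by rewrite /restr inE e'E' reach gam_h.
rewrite /restr inE e'E' gam_h // andbT (connect_trans reach) //.
by apply: connect1; rewrite /= /restr e'E'.
Qed.

Lemma ncomp_restr_component h : (forall e v, gam e v -> h e v) -> e0 \in E' -> ncomp h P = 1.
Proof.
move=> gam_h e0E'; have P_sym := sym_connect_sym (bgrel_sym (restr h P)).
have P_closed : closed (bgrel (restr h P)) (rverts h P) by apply: closed_rverts.
have e0P : inl e0 \in rverts h P by rewrite !inE e0E' connect0.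
rewrite /ncomp -(n_comp_connect P_sym (inl e0)); apply: eq_n_comp_r => x.
apply/idP/idP => [| reach]; last by rewrite -(closed_connect P_closed reach).
case: x => [e | v]; rewrite !inE; last move=> /existsP[e /andP[eP hev]].
  by case/andP=> _ /(connect_restr_component gam_h).
move: (eP); rewrite inE => /andP[_ /(connect_restr_component gam_h) reach].
by apply: connect_trans reach (connect1 _); rewrite /= /restr eP.
Qed.

Lemma bigU_restr_component : tight g f E' -> Defs.bigU g P = Defs.bigU gam P.
Proof.
move=> E'_tight; apply/setP => v; rewrite !inE.
apply/existsP/existsP => -[e /andP[eP hev]]; last by exists e; rewrite eP gam_g.
move: (eP); rewrite inE => /andP[eE' reach].
have := connect_trans reach (tight_edge_connect E'_tight eE' hev).
case/connect_last => // -[e'|v'] reach' //= /andP[e'E' gam_e'v].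
by exists e'; rewrite inE e'E' reach' gam_e'v.
Qed.

Lemma tight_restr_component : tight g f E' -> e0 \in E' -> tight g f P.
Proof.
move=> E'_tight e0E'; have P_neq0 : P != set0.
  by apply/set0Pn; exists e0; rewrite inE e0E' connect0.
apply/(tightE g f P_neq0); rewrite (ncomp_restr_component gam_g e0E') bigU_restr_component //.
rewrite -(n_comp_restr_realizes P (fun _ _ => id)) -[n_comp _ _]/(ncomp gam P).
by rewrite ncomp_restr_component // addnC.
Qed.
End TightComponent.

Theorem lemma2p9 (E V : finType) (g gam : E -> V -> bool) (f : E -> nat)
    (E' : {set E}) :
  connected g -> hypertree g f -> spanning_tree g gam -> realizes gam f ->
  tight g f E' ->
  forall e0, e0 \in E' ->
    tight g f [set e in E' | connect (bgrel (restr gam E')) (inl e0) (inl e)].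
Proof.
move=> _ _ [gam_g _ gam_acyclic] gam_f E'_tight e0 e0E'.
exact: tight_restr_component.
Qed.
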